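(* Let $\mathcal X$ and $\mathcal U$ be finite nonempty sets, $f:\mathcal X\times\mathcal U\to\mathcal X$, and $\ell_1,\ell_2:\mathcal X\to\mathbb R$. Define, for $x\in\mathcal X$, $V_{\mathrm{R}i}^*(x)=\max_{\pi\in\Pi}\max_{\tau\in\mathbb N}\ell_i(\xi_x^\pi(\tau))$ for $i=1,2$, $$\hat\ell(x)=\max\big\{\min\{\ell_1(x),V_{\mathrm{R}2}^*(x)\},\ \min\{V_{\mathrm{R}1}^*(x),\ell_2(x)\}\big\},\qquad \tilde V_{\mathrm R}^*(x)=\max_{\pi\in\Pi}\max_{\tau\in\mathbb N}\hat\ell(\xi_x^\pi(\tau)).$$ Then for every $x\in\mathcal X$, $$\max_{\bar\pi\in\overline\Pi}\min\Big\{\max_{\tau\in\mathbb N}\ell_1(\bar\xi_x^{\bar\pi}(\tau)),\max_{\tau\in\mathbb N}\ell_2(\bar\xi_x^{\bar\pi}(\tau))\Big\}=\max_{\mathbf u\in\mathbb U}\min\Big\{\max_{\tau\in\mathbb N}\ell_1(\xi_x^{\mathbf u}(\tau)),\max_{\tau\in\mathbb N}\ell_2(\xi_x^{\mathbf u}(\tau))\Big\}=\tilde V_{\mathrm R}^*(x).$$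
   Context: $\mathbb N=\{0,1,2,\dots\}$. $\Pi$ is the set of maps $\pi:\mathcal X\to\mathcal U$ and $\mathbb U$ the set of action sequences $\mathbf u:\mathbb N\to\mathcal U$. For $x\in\mathcal X$ and $\pi\in\Pi$, $\xi_x^\pi(0)=x$, $\xi_x^\pi(t+1)=f(\xi_x^\pi(t),\pi(\xi_x^\pi(t)))$; for $\mathbf u\in\mathbb U$, $\xi_x^{\mathbf u}(0)=x$, $\xi_x^{\mathbf u}(t+1)=f(\xi_x^{\mathbf u}(t),\mathbf u(t))$. Let $\mathcal Y=\{\ell_1(x):x\in\mathcal X\}$, $\mathcal Z=\{\ell_2(x):x\in\mathcal X\}$, and $\overline\Pi$ the set of augmented policies $\bar\pi:\mathcal X\times\mathcal Y\times\mathcal Z\to\mathcal U$. The augmented trajectory is defined by $\bar\xi_x^{\bar\pi}(0)=x$, $\bar y_x^{\bar\pi}(0)=\ell_1(x)$, $\bar z_x^{\bar\pi}(0)=\ell_2(x)$, $\bar\xi_x^{\bar\pi}(t+1)=f\big(\bar\xi_x^{\bar\pi}(t),\bar\pi(\bar\xi_x^{\bar\pi}(t),\bar y_x^{\bar\pi}(t),\bar z_x^{\bar\pi}(t))\big)$, $\bar y_x^{\bar\pi}(t+1)=\max\{\ell_1(\bar\xi_x^{\bar\pi}(t+1)),\bar y_x^{\bar\pi}(t)\}$, $\bar z_x^{\bar\pi}(t+1)=\max\{\ell_2(\bar\xi_x^{\bar\pi}(t+1)),\bar z_x^{\bar\pi}(t)\}$. *)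

From HB Require Import structures.
From mathcomp Require Import all_boot all_order all_algebra.
From mathcomp Require Import boolp classical_sets reals.
Set Implicit Arguments. Unset Strict Implicit. Unset Printing Implicit Defensive.
Import Order.TTheory GRing.Theory Num.Theory.
Local Open Scope ring_scope.
Local Open Scope classical_set_scope.

Section Defs.
Variables (R : realType) (X U : finType) (f : X -> U -> X).

Fixpoint traj_pi (pi : X -> U) (x : X) (t : nat) : X :=
  match t with
  | O => x
  | S t' => let s := traj_pi pi x t' in f s (pi s)
  end.

Fixpoint traj_u (u : nat -> U) (x : X) (t : nat) : X :=
  match t with
  | O => x
  | S t' => let s := traj_u u x t' in f s (u t')
  end.

(* The value set  { l x : x in X }  as a type (the sets calY, calZ). *)
Definition valset (l : X -> R) : Type := {y : R | exists x, l x = y}.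

Definition vinj (l : X -> R) (x : X) : valset l := exist _ (l x) (ex_intro _ x erefl).

Lemma vmax_in (l : X -> R) (x : X) (y : valset l) :
  exists x', l x' = Num.max (l x) (proj1_sig y).
Proof.
case: y => y [x0 Hx0] /=; rewrite -Hx0; case: (leP (l x) (l x0)) => _; by eexists.
Qed.

Definition vmax (l : X -> R) (x : X) (y : valset l) : valset l :=
  exist _ (Num.max (l x) (proj1_sig y)) (vmax_in x y).

Fixpoint aug_traj (l1 l2 : X -> R) (pib : X -> valset l1 -> valset l2 -> U)
    (x : X) (t : nat) : X * valset l1 * valset l2 :=
  match t with
  | O => (x, vinj l1 x, vinj l2 x)
  | S t' =>
      let: (s, y, z) := aug_traj pib x t' in
      let s' := f s (pib s y z) in
      (s', vmax s' y, vmax s' z)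
  end.

Definition aug_state (l1 l2 : X -> R) (pib : X -> valset l1 -> valset l2 -> U)
    (x : X) (t : nat) : X := (aug_traj pib x t).1.1.

Definition VRstar (l : X -> R) (x : X) : R :=
  sup (range (fun pi : X -> U => sup (range (fun t : nat => l (traj_pi pi x t))))).

Definition lhat (l1 l2 : X -> R) (x : X) : R :=
  Num.max (Num.min (l1 x) (VRstar l2 x)) (Num.min (VRstar l1 x) (l2 x)).

Definition VRtilde (l1 l2 : X -> R) (x : X) : R :=
  sup (range (fun pi : X -> U =>
    sup (range (fun t : nat => lhat l1 l2 (traj_pi pi x t))))).

End Defs.

From HB Require Import structures.
From mathcomp Require Import all_boot all_order all_algebra.
From mathcomp Require Import boolp classical_sets reals.
Set Implicit Arguments. Unset Strict Implicit. Unset Printing Implicit Defensive.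
Import Order.TTheory GRing.Theory Num.Theory.
Local Open Scope ring_scope.
Local Open Scope classical_set_scope.

(* All suprema involved range over finitely many values, so they are attained
   maxima.  Since X is finite, any target reachable by an open-loop action
   sequence is reached by a stationary policy that greedily shortens the
   distance to the target.  Hence if l1 and l2 peak along an open-loop run at
   times a <= b, the state at time a is policy-reachable and from it l2 reaches
   its peak, so the payoff is at most lhat there, hence at most Ṽ;
   conversely, concatenating two policy runs realises each term of lhat along
   a single action sequence.  Augmented runs are open-loop runs; conversely, if
   c is the payoff of an open-loop run, the same reachability argument on
   X × bool × bool gives a stationary policy raising both flags "l_i >= c has
   been met", and it is an augmented policy because the flags can be read off
   the running maxima y and z. *)

Section FiniteValuedSup.
Variables (R : realType) (I : Type) (X : finType) (l : X -> R) (F : I -> R).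
Hypothesis F_fin : forall i, exists w, F i = l w.

Lemma sup_range_attained (i0 : I) :
  exists2 i, sup (range F) = F i & forall j, F j <= F i.
Proof.
pose P w := `[< exists i, F i = l w >].
have [w0 Fw0] := F_fin i0.
have P_w0 : P w0 by apply/asboolP; exists i0.
case: (arg_maxP l P_w0) => w /asboolP[i Fi] w_max.
have F_le j : F j <= F i.
  have [wj Fj] := F_fin j.
  by rewrite Fi Fj; apply: w_max; apply/asboolP; exists j.
exists i => //; apply/le_anti/andP; split.
  by apply: ge_sup; [exists (F i), i | move=> _ [j _ <-]].
by apply: ub_le_sup; [exists (F i) => _ [j _ <-] | exists i].
Qed.

Lemma le_sup_range_fin i : F i <= sup (range F).
Proof. by have [j -> ?] := sup_range_attained i. Qed.

Lemma sup_range_le_fin (i0 : I) M : (forall i, F i <= M) -> sup (range F) <= M.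
Proof. by have [j -> _] := sup_range_attained i0. Qed.

End FiniteValuedSup.

Section Trajectories.
Variables (S U : finType) (g : S -> U -> S).

Lemma traj_u_add (u : nat -> U) s a k :
  traj_u g u s (a + k) = traj_u g (fun j => u (a + j)%N) (traj_u g u s a) k.
Proof. by elim: k => [|k IH]; rewrite ?addn0 // addnS /= IH. Qed.

Lemma eq_traj_u (u v : nat -> U) s t :
  (forall k, (k < t)%N -> u k = v k) -> traj_u g u s t = traj_u g v s t.
Proof. by elim: t => [|t IH] uv //=; rewrite IH ?uv // => k /ltnW/uv. Qed.

Lemma traj_piS (pi : S -> U) s t :
  traj_pi g pi s t.+1 = traj_pi g pi (g s (pi s)) t.
Proof. by elim: t => [|t /= <-]. Qed.

Definition closed_loop_actions (pi : S -> U) s : nat -> U :=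
  fun k => pi (traj_pi g pi s k).

Lemma traj_pi_closed_loop (pi : S -> U) s t :
  traj_pi g pi s t = traj_u g (closed_loop_actions pi s) s t.
Proof. by elim: t => [|t /= <-]. Qed.

Definition cat_actions (t : nat) (u1 u2 : nat -> U) : nat -> U :=
  fun k => if (k < t)%N then u1 k else u2 (k - t)%N.

Lemma traj_cat_actions_prefix (u1 u2 : nat -> U) s t :
  traj_u g (cat_actions t u1 u2) s t = traj_u g u1 s t.
Proof. by apply: eq_traj_u => k kt; rewrite /cat_actions kt. Qed.

Lemma traj_cat_actions_suffix (u1 u2 : nat -> U) s t k :
  traj_u g (cat_actions t u1 u2) s (t + k) = traj_u g u2 (traj_u g u1 s t) k.
Proof.
rewrite traj_u_add traj_cat_actions_prefix; congr traj_u.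
by apply: funext => j; rewrite /cat_actions ltnNge leq_addr addKn.
Qed.

End Trajectories.

Section Reachability.
Variables (S U : finType) (g : S -> U -> S) (P : pred S).

Definition reachable_in (n : nat) (s : S) : bool :=
  `[< exists u, P (traj_u g u s n) >].

Lemma reachable_inS n s : reachable_in n.+1 s -> exists a, reachable_in n (g s a).
Proof.
move=> /asboolP[u Pu]; exists (u 0%N); apply/asboolP.
by exists (fun j => u j.+1); rewrite -add1n traj_u_add in Pu.
Qed.

Variable a0 : U.

(* Step to a state whose distance to [P], the least [n] with [reachable_in n],
   is one less. *)
Definition greedy_policy (s : S) : U :=
  if pselect (exists n, reachable_in n s) is left ex_n
  then odflt a0 [pick a | reachable_in (ex_minn ex_n).-1 (g s a)]
  else a0.

Lemma greedy_policy_progress n s : reachable_in n s -> ~~ P s ->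
  exists2 m, (m < n)%N & reachable_in m (g s (greedy_policy s)).
Proof.
move=> reach_n notP; rewrite /greedy_policy.
case: pselect => [ex_n|]; last by case; exists n.
case: ex_minnP => -[/asboolP[u Pu]|m reach_m min_m]; first by rewrite Pu in notP.
case: pickP => [a reach_a|none] /=; first by exists m => //; apply: min_m.
by have [a reach_a] := reachable_inS reach_m; rewrite none in reach_a.
Qed.

Lemma greedy_policy_reaches n s : reachable_in n s ->
  exists t, P (traj_pi g greedy_policy s t).
Proof.
elim/ltn_ind: n s => n IH s reach_n.
have [Ps|notP] := boolP (P s); first by exists 0%N.
have [m lt_mn reach_m] := greedy_policy_progress reach_n notP.
by have [t Pt] := IH m lt_mn _ reach_m; exists t.+1; rewrite traj_piS.
Qed.

End Reachability.

Lemma policy_reaches_open_loop_target (S U : finType) (g : S -> U -> S) (P : pred S)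
    (u : nat -> U) s t :
  P (traj_u g u s t) -> exists pi t', P (traj_pi g pi s t').
Proof.
move=> Pt; have reach_t : reachable_in g P t s by apply/asboolP; exists u.
by exists (greedy_policy g P (u 0%N)); apply: greedy_policy_reaches reach_t.
Qed.

Lemma policy_reaches_open_loop_state (S U : finType) (g : S -> U -> S)
    (u : nat -> U) s t :
  exists pi t', traj_pi g pi s t' = traj_u g u s t.
Proof.
have [pi [t' /eqP reach]] :=
  @policy_reaches_open_loop_target S U g (pred1 (traj_u g u s t)) u s t (eqxx _).
by exists pi, t'.
Qed.

Lemma has_mkseq (T : Type) (p : pred T) (s : nat -> T) n k :
  (k < n)%N -> p (s k) -> has p (mkseq s n).
Proof.
by move=> lt_kn pk; rewrite has_map; apply/hasP; exists k; rewrite ?mem_iota.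
Qed.

Section Monitor.
Variables (X U : finType) (f : X -> U -> X) (p1 p2 : pred X).

Definition monitor_step (s : X * bool * bool) (a : U) : X * bool * bool :=
  let w := f s.1.1 a in (w, s.1.2 || p1 w, s.2 || p2 w).

Definition monitor_init (x : X) : X * bool * bool := (x, p1 x, p2 x).

Lemma traj_monitor u x t :
  traj_u monitor_step u (monitor_init x) t =
  (traj_u f u x t, has p1 (mkseq (traj_u f u x) t.+1),
                   has p2 (mkseq (traj_u f u x) t.+1)).
Proof.
elim: t => [|t IH]; first by rewrite /= !orbF.
by rewrite [LHS]/= IH; congr (_, _, _); rewrite (mkseqS _ t.+1) has_rcons orbC.
Qed.

End Monitor.

Section Peaks.
Variables (R : realType) (X : finType).

Definition peak (l : X -> R) (s : nat -> X) : R := sup (range (fun t => l (s t))).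

Definition payoff (l1 l2 : X -> R) (s : nat -> X) : R :=
  Num.min (peak l1 s) (peak l2 s).

Lemma peak_ge (l : X -> R) s t : l (s t) <= peak l s.
Proof. by apply: (le_sup_range_fin (l := l)) => j; exists (s j). Qed.

Lemma peak_attained (l : X -> R) s : exists t, peak l s = l (s t).
Proof.
have s_fin j : exists w, l (s j) = l w by exists (s j).
by have [t peak_t _] := sup_range_attained s_fin 0%N; exists t.
Qed.

Lemma payoffC (l1 l2 : X -> R) : payoff l1 l2 = payoff l2 l1.
Proof. by apply: funext => s; exact: minC. Qed.

Lemma payoff_ge (l1 l2 : X -> R) s a b :
  Num.min (l1 (s a)) (l2 (s b)) <= payoff l1 l2 s.
Proof. by rewrite le_min !ge_min !peak_ge ?orbT. Qed.

Lemma payoff_attained (l1 l2 : X -> R) s :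
  exists a b, payoff l1 l2 s = Num.min (l1 (s a)) (l2 (s b)).
Proof.
have [[a pa] [b pb]] := (peak_attained l1 s, peak_attained l2 s).
by exists a, b; rewrite /payoff pa pb.
Qed.

Section Families.
Variables (l1 l2 : X -> R) (I : Type) (S : I -> nat -> X).

Let payoff_fin i : exists ab : X * X,
  payoff l1 l2 (S i) = (fun ab => Num.min (l1 ab.1) (l2 ab.2)) ab.
Proof. by have [a [b ->]] := payoff_attained l1 l2 (S i); exists (S i a, S i b). Qed.

Lemma le_sup_payoff i :
  payoff l1 l2 (S i) <= sup (range (fun j => payoff l1 l2 (S j))).
Proof. exact: le_sup_range_fin payoff_fin i. Qed.

Lemma sup_payoff_le (i0 : I) M : (forall i, payoff l1 l2 (S i) <= M) ->
  sup (range (fun j => payoff l1 l2 (S j))) <= M.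
Proof. exact: sup_range_le_fin payoff_fin i0 M. Qed.

End Families.
End Peaks.

Section Augmented.
Variables (R : realType) (X U : finType) (f : X -> U -> X) (l1 l2 : X -> R).
Implicit Types (pib : X -> valset l1 -> valset l2 -> U) (x : X).

Definition aug_actions pib x : nat -> U :=
  fun t => let: (s, y, z) := aug_traj f pib x t in pib s y z.

Lemma aug_state_open_loop pib x t :
  aug_state f pib x t = traj_u f (aug_actions pib x) x t.
Proof.
elim: t => [|t /= <-] //; rewrite /aug_state /aug_actions /=.
by case: (aug_traj f pib x t) => -[].
Qed.

Lemma aug_running_max_le_peak pib x t :
  sval (aug_traj f pib x t).1.2 <= peak l1 (aug_state f pib x) /\
  sval (aug_traj f pib x t).2 <= peak l2 (aug_state f pib x).
Proof.
elim: t => [|t]; first by rewrite !(peak_ge _ _ 0%N).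
have := peak_ge l1 (aug_state f pib x) t.+1.
have := peak_ge l2 (aug_state f pib x) t.+1.
rewrite /aug_state /=; case: (aug_traj f pib x t) => -[s y z] /=.
by move=> le2 le1 [ley lez]; rewrite !ge_max le1 le2 ley lez.
Qed.

Variable c : R.
Let above1 (w : X) := c <= l1 w.
Let above2 (w : X) := c <= l2 w.

(* [c <= max (l w) y] iff [c <= l w] or [c <= y]: thresholding the running
   maxima reproduces the flags of [monitor_step]. *)
Definition aug_of_monitor (pih : X * bool * bool -> U) :
  X -> valset l1 -> valset l2 -> U :=
  fun w y z => pih (w, c <= sval y, c <= sval z).

Lemma traj_monitor_aug pih x t :
  traj_pi (monitor_step f above1 above2) pih (monitor_init above1 above2 x) t =
  (aug_state f (aug_of_monitor pih) x t,
   c <= sval (aug_traj f (aug_of_monitor pih) x t).1.2,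
   c <= sval (aug_traj f (aug_of_monitor pih) x t).2).
Proof.
elim: t => [|t IH] //; rewrite [LHS]/= IH /aug_state /=.
case: (aug_traj _ _ x t) => -[s y z].
by rewrite /monitor_step /= !le_max orbC [X in _ = (_, _, X)]orbC.
Qed.

End Augmented.

Lemma open_loop_payoff_le_aug (R : realType) (X U : finType) (f : X -> U -> X)
    (l1 l2 : X -> R) (u : nat -> U) (x : X) :
  exists pib : X -> valset l1 -> valset l2 -> U,
    payoff l1 l2 (traj_u f u x) <= payoff l1 l2 (aug_state f pib x).
Proof.
have [a [b pay_ab]] := payoff_attained l1 l2 (traj_u f u x).
pose c := payoff l1 l2 (traj_u f u x).
pose p1 w := c <= l1 w; pose p2 w := c <= l2 w.
have p1a : p1 (traj_u f u x a) by rewrite /p1 /c pay_ab ge_min lexx.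
have p2b : p2 (traj_u f u x b) by rewrite /p2 /c pay_ab ge_min lexx orbT.
pose both_flags (s : X * bool * bool) := s.1.2 && s.2.
have flags_set :
    both_flags (traj_u (monitor_step f p1 p2) u (monitor_init p1 p2 x) (maxn a b)).
  rewrite traj_monitor; apply/andP; split.
    by apply: has_mkseq p1a; rewrite ltnS leq_maxl.
  by apply: has_mkseq p2b; rewrite ltnS leq_maxr.
have [pih [T]] := policy_reaches_open_loop_target flags_set.
pose pib : X -> valset l1 -> valset l2 -> U := aug_of_monitor c pih.
rewrite traj_monitor_aug -/pib => /andP[c_le_y c_le_z].
have [y_le z_le] := aug_running_max_le_peak f pib x T.
by exists pib; rewrite le_min (le_trans c_le_y) ?(le_trans c_le_z).
Qed.

Section Values.
Variables (R : realType) (X U : finType) (f : X -> U -> X) (a0 : U).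

Lemma VRstar_ge (l : X -> R) pi w t : l (traj_pi f pi w t) <= VRstar f l w.
Proof.
apply: le_trans (peak_ge l _ t) _.
apply: (le_sup_range_fin (l := l) (F := fun pi => peak l (traj_pi f pi w))) => pi'.
by have [t' ->] := peak_attained l (traj_pi f pi' w); exists (traj_pi f pi' w t').
Qed.

Lemma VRstar_attained (l : X -> R) w :
  exists pi t, VRstar f l w = l (traj_pi f pi w t).
Proof.
have peak_fin pi : exists w', peak l (traj_pi f pi w) = l w'.
  by have [t ->] := peak_attained l (traj_pi f pi w); exists (traj_pi f pi w t).
have [pi VR_pi _] := sup_range_attained peak_fin (fun _ => a0).
by have [t peak_t] := peak_attained l (traj_pi f pi w); exists pi, t; rewrite -peak_t.
Qed.

Lemma lhatC (l1 l2 : X -> R) : lhat f l1 l2 = lhat f l2 l1.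
Proof.
by apply: funext => w; rewrite /lhat maxC minC [Num.min (VRstar _ _ _) _]minC.
Qed.

Lemma VRtildeE (l1 l2 : X -> R) : VRtilde f l1 l2 = VRstar f (lhat f l1 l2).
Proof. by []. Qed.

Lemma VRtildeC (l1 l2 : X -> R) : VRtilde f l1 l2 = VRtilde f l2 l1.
Proof. by rewrite /VRtilde lhatC. Qed.

Definition open_loop_value (l1 l2 : X -> R) (x : X) : R :=
  sup (range (fun u : nat -> U => payoff l1 l2 (traj_u f u x))).

Definition aug_value (l1 l2 : X -> R) (x : X) : R :=
  sup (range (fun pib : X -> valset l1 -> valset l2 -> U =>
    payoff l1 l2 (aug_state f pib x))).

Lemma open_loop_valueC (l1 l2 : X -> R) :
  open_loop_value l1 l2 = open_loop_value l2 l1.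
Proof. by rewrite /open_loop_value payoffC. Qed.

Lemma aug_value_eq_open_loop (l1 l2 : X -> R) x :
  aug_value l1 l2 x = open_loop_value l1 l2 x.
Proof.
rewrite /aug_value /open_loop_value; apply/le_anti/andP; split.
  apply: (sup_payoff_le (fun _ _ _ => a0)) => pib.
  have -> : aug_state f pib x = traj_u f (aug_actions f pib x) x.
    by apply: funext => t; exact: aug_state_open_loop.
  exact: (le_sup_payoff l1 l2 (traj_u f ^~ x)).
apply: (sup_payoff_le (fun _ => a0)) => u.
have [pib open_le_aug] := open_loop_payoff_le_aug f l1 l2 u x.
apply: le_trans open_le_aug _.
exact: (le_sup_payoff l1 l2
  (fun pib : X -> valset l1 -> valset l2 -> U => aug_state f pib x)).
Qed.

Lemma ordered_payoff_le_VRtilde (l1 l2 : X -> R) u x a b : (a <= b)%N ->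
  Num.min (l1 (traj_u f u x a)) (l2 (traj_u f u x b)) <= VRtilde f l1 l2 x.
Proof.
move=> le_ab.
have [pi [t reach_a]] := policy_reaches_open_loop_state f u x a.
have [pi' [t' reach_b]] :=
  policy_reaches_open_loop_state f (fun j => u (a + j)%N) (traj_u f u x a) (b - a).
rewrite -traj_u_add subnKC // in reach_b.
apply: le_trans (VRstar_ge (lhat f l1 l2) pi x t).
rewrite reach_a /lhat le_max le_min ge_min lexx /=.
by rewrite ge_min -reach_b VRstar_ge orbT.
Qed.

Lemma open_loop_value_le_VRtilde (l1 l2 : X -> R) x :
  open_loop_value l1 l2 x <= VRtilde f l1 l2 x.
Proof.
apply: (sup_payoff_le (fun _ => a0)) => u.
have [a [b ->]] := payoff_attained l1 l2 (traj_u f u x).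
have [le_ab|lt_ba] := leqP a b; first exact: ordered_payoff_le_VRtilde.
by rewrite minC VRtildeC; apply: ordered_payoff_le_VRtilde; exact: ltnW.
Qed.

Lemma min_VRstar_le_open_loop_value (l1 l2 : X -> R) pi x t :
  Num.min (l1 (traj_pi f pi x t)) (VRstar f l2 (traj_pi f pi x t))
  <= open_loop_value l1 l2 x.
Proof.
set w := traj_pi f pi x t.
have [pi' [t' ->]] := VRstar_attained l2 w.
pose u := cat_actions t (closed_loop_actions f pi x) (closed_loop_actions f pi' w).
have u_t : traj_u f u x t = w by rewrite traj_cat_actions_prefix -traj_pi_closed_loop.
have u_tt' : traj_u f u x (t + t') = traj_pi f pi' w t'.
  by rewrite traj_cat_actions_suffix -!traj_pi_closed_loop.
rewrite -{1}u_t -u_tt'; apply: le_trans (payoff_ge _ _ _ _ _) _.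
exact: (le_sup_payoff l1 l2 (traj_u f ^~ x)).
Qed.

Lemma VRtilde_le_open_loop_value (l1 l2 : X -> R) x :
  VRtilde f l1 l2 x <= open_loop_value l1 l2 x.
Proof.
rewrite VRtildeE; have [pi [t ->]] := VRstar_attained (lhat f l1 l2) x.
rewrite /lhat ge_max min_VRstar_le_open_loop_value /= minC open_loop_valueC.
exact: min_VRstar_le_open_loop_value.
Qed.

Lemma open_loop_value_eq_VRtilde (l1 l2 : X -> R) x :
  open_loop_value l1 l2 x = VRtilde f l1 l2 x.
Proof.
by apply/le_anti; rewrite open_loop_value_le_VRtilde VRtilde_le_open_loop_value.
Qed.

End Values.

Theorem theorem2 (R : realType) (X U : finType) (HX : (0 < #|X|)%N) (HU : (0 < #|U|)%N)
  (f : X -> U -> X) (l1 l2 : X -> R) (x : X) :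
  sup (range (fun pib : X -> valset l1 -> valset l2 -> U =>
     Num.min (sup (range (fun t : nat => l1 (aug_state f pib x t))))
             (sup (range (fun t : nat => l2 (aug_state f pib x t))))))
  = sup (range (fun u : nat -> U =>
     Num.min (sup (range (fun t : nat => l1 (traj_u f u x t))))
             (sup (range (fun t : nat => l2 (traj_u f u x t))))))
  /\
  sup (range (fun u : nat -> U =>
     Num.min (sup (range (fun t : nat => l1 (traj_u f u x t))))
             (sup (range (fun t : nat => l2 (traj_u f u x t))))))
  = VRtilde f l1 l2 x.
Proof.
have [a0 _] := card_gt0P HU.
split; first exact: aug_value_eq_open_loop a0 l1 l2 x.
exact: open_loop_value_eq_VRtilde a0 l1 l2 x.
Qed.
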